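(* Let $n$ be a positive integer and let $A\subseteq\mathbb{Z}/n\mathbb{Z}$ be a basis of $\mathbb{Z}/n\mathbb{Z}$. Then $|A|\cdot\rho(A)<2n$.
   Context: A subset $A\subseteq\mathbb{Z}/n\mathbb{Z}$ is a basis if $hA=\mathbb{Z}/n\mathbb{Z}$ for some positive integer $h$, where $hA=\{a_1+\dots+a_h: a_i\in A\}$; the least such $h$ is denoted $\rho(A)$. *)

(* Z/nZ is modelled by 'I_n with addition mod n
   (avoids the 'Z_n convention which breaks for n = 1). *)
From mathcomp Require Import all_boot.
Set Implicit Arguments. Unset Strict Implicit. Unset Printing Implicit Defensive.

Definition sumset (n h : nat) (A : {set 'I_n}) : {set 'I_n} :=
  [set x : 'I_n | [exists t : h.-tuple 'I_n,
     all (fun a => a \in A) t && ((\sum_(a <- t) (a : nat)) %% n == x)]].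

Definition is_basis (n : nat) (A : {set 'I_n}) : Prop :=
  exists h, 0 < h /\ sumset h A = [set: 'I_n].

Definition is_rho (n : nat) (A : {set 'I_n}) (r : nat) : Prop :=
  [/\ 0 < r, sumset r A = [set: 'I_n] &
      forall h, 0 < h -> sumset h A = [set: 'I_n] -> r <= h].

From mathcomp Require Import all_boot all_algebra zify.
Set Implicit Arguments. Unset Strict Implicit. Unset Printing Implicit Defensive.
Import GRing.Theory.

(* For B nonempty and proper, call X admissible if X is nonempty and
   X + B <> G; the connectivity kappa(B) is the least growth
   |X + B| - |X| of an admissible X, fragments are the admissible sets of
   growth kappa(B), and an atom is a fragment of least cardinality.
   - Submodularity of X |-> |X + B| and the duality X |-> -(G \ (X + B)),
     which maps fragments to fragments, show that two atoms sharing a point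
     are equal; hence the atom through 0 is a subgroup K (fragment_subgroup).
   - Iterating the definition of kappa gives |jB| >= |B| + (j - 1) kappa(B)
     as long as jB <> G (nfold_growth).
   - If B generates G additively, B meets two cosets of K, so
     2|K| <= |K + B| = |K| + kappa(B) and |B| <= |K + B| <= 2 kappa(B).
   With j = rho(B) - 1 these two estimates give |B| rho(B) < 2|G|
   (basis_card_bound); the theorem is its instance G = Z/nZ. *)

Section Sumsets.
Variable G : finZmodType.
Implicit Types (X Y B : {set G}) (g x : G).

Definition ssum X B : {set G} := [set (x + b)%R | x in X, b in B].
Definition shift X g : {set G} := [set (x + g)%R | x in X].
Definition sneg X : {set G} := [set (- x)%R | x in X].

Lemma mem_ssum X B x b : x \in X -> b \in B -> (x + b)%R \in ssum X B.
Proof. exact: imset2_f. Qed.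

Lemma ssumC X B : ssum X B = ssum B X.
Proof.
by apply/setP => z; apply/imset2P/imset2P => -[x b hx hb ->]; exists b x; rewrite // addrC.
Qed.

Lemma ssumSl X Y B : X \subset Y -> ssum X B \subset ssum Y B.
Proof. exact: imset2Sl. Qed.

Lemma ssumUl X Y B : ssum (X :|: Y) B = ssum X B :|: ssum Y B.
Proof. exact: imset2Ul. Qed.

Lemma ssum_set1l x B : ssum [set x] B = shift B x.
Proof. by rewrite ssumC /ssum imset2_set1r. Qed.

Lemma mem_shift X g z : (z \in shift X g) = ((z - g)%R \in X).
Proof.
apply/imsetP/idP => [[y hy ->]|h]; first by rewrite addrK.
by exists (z - g)%R; rewrite ?subrK.
Qed.

Lemma card_shift X g : #|shift X g| = #|X|.
Proof. by apply: card_imset; apply: addIr. Qed.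

Lemma shift0 X : shift X 0%R = X.
Proof. by apply/setP => z; rewrite mem_shift subr0. Qed.

Lemma ssum_shift X B g : ssum (shift X g) B = shift (ssum X B) g.
Proof.
apply/setP => z; rewrite mem_shift; apply/imset2P/imset2P.
  case=> y b; rewrite mem_shift => hy hb ->.
  by exists (y - g)%R b; rewrite // addrAC.
case=> x b hx hb e; exists (x + g)%R b; rewrite ?mem_shift ?addrK //.
by rewrite addrAC -e subrK.
Qed.

Lemma shift_sub_ssum X B b : b \in B -> shift X b \subset ssum X B.
Proof.
move=> hb; apply/subsetP => z; rewrite mem_shift => hz.
by rewrite -(subrK b z) mem_ssum.
Qed.

Lemma card_ssum_l X B b : b \in B -> #|X| <= #|ssum X B|.
Proof. by move=> /(shift_sub_ssum X)/subset_leq_card; rewrite card_shift. Qed.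

Lemma card_ssum_r X B x : x \in X -> #|B| <= #|ssum X B|.
Proof. by rewrite ssumC; apply: card_ssum_l. Qed.

Lemma ssumTl B : B != set0 -> ssum setT B = setT.
Proof.
case/set0Pn => b hb; apply/setP => z.
by rewrite inE -(subrK b z) mem_ssum ?inE.
Qed.

Lemma mem_sneg X z : (z \in sneg X) = ((- z)%R \in X).
Proof.
apply/imsetP/idP => [[y hy ->]|h]; first by rewrite opprK.
by exists (- z)%R; rewrite ?opprK.
Qed.

Lemma card_sneg X : #|sneg X| = #|X|.
Proof. by apply: card_imset; apply: oppr_inj. Qed.

Lemma card_leT X : #|X| <= #|G|.
Proof. exact: max_card. Qed.

Lemma card_ltT X : (#|X| < #|G|) = (X != setT).
Proof. by rewrite -cardsT -properT properEcard subsetT. Qed.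

Lemma cardsC_G X : #|X| + #|~: X| = #|G|.
Proof. exact: cardsC. Qed.

Lemma card_ssumUI X Y B :
  #|ssum (X :|: Y) B| + #|ssum (X :&: Y) B| <= #|ssum X B| + #|ssum Y B|.
Proof.
rewrite ssumUl -(cardsUI (ssum X B)) leq_add2l; apply: subset_leq_card.
by rewrite subsetI !ssumSl ?subsetIl ?subsetIr.
Qed.

End Sumsets.

Section Connectivity.
Variables (G : finZmodType) (B : {set G}).
Implicit Types (X Y K : {set G}) (g x : G).

Definition admissible X := (X != set0) && (ssum X B != setT).
Definition growth X := #|ssum X B| - #|X|.
Definition kappa_witness := [arg min_(X < [set 0%R] | admissible X) growth X].
Definition kappa := growth kappa_witness.
Definition fragment X := admissible X && (growth X == kappa).
Definition atom := [arg min_(X < kappa_witness | fragment X) #|X|].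

Hypotheses (B0 : B != set0) (BT : B != setT).

Lemma ssum_growth X : #|ssum X B| = #|X| + growth X.
Proof. by case/set0Pn: B0 => b /(card_ssum_l X)/subnKC. Qed.

Lemma admissibleE X : admissible X = (0 < #|X|) && (#|ssum X B| < #|G|).
Proof. by rewrite card_gt0 card_ltT. Qed.

Lemma fragmentE X : fragment X = admissible X && (#|ssum X B| == #|X| + kappa).
Proof. by rewrite /fragment ssum_growth eqn_add2l. Qed.

Lemma fragmentP X : reflect (admissible X /\ #|ssum X B| = #|X| + kappa) (fragment X).
Proof. by rewrite fragmentE; apply: (iffP andP) => -[-> /eqP]. Qed.

(* Singletons are admissible because B is a proper subset of G. *)
Lemma admissible_set1 x : admissible [set x].
Proof. by rewrite admissibleE cards1 ssum_set1l card_shift card_ltT BT. Qed.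

Lemma kappa_spec : admissible kappa_witness /\ forall X, admissible X -> kappa <= growth X.
Proof. by rewrite /kappa /kappa_witness; case: arg_minnP; first exact: admissible_set1. Qed.

Lemma kappa_min X : admissible X -> #|X| + kappa <= #|ssum X B|.
Proof. by rewrite ssum_growth leq_add2l; apply: kappa_spec.2. Qed.

Lemma atom_spec : fragment atom /\ forall X, fragment X -> #|atom| <= #|X|.
Proof.
rewrite /atom; case: arg_minnP => //.
by rewrite /fragment eqxx andbT; exact: kappa_spec.1.
Qed.

Lemma fragment_shift X g : fragment X -> fragment (shift X g).
Proof. by rewrite !fragmentE !admissibleE ssum_shift !card_shift. Qed.

(* Duality: -(G \ (X + B)) is again a fragment, since its sum with B
   avoids -X. *)
Lemma fragment_dual X : fragment X -> fragment (sneg (~: ssum X B)).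
Proof.
set Y := sneg _; case/fragmentP; rewrite admissibleE => /andP[X0 XB] sX.
have sub : ssum Y B \subset sneg (~: X).
  apply/subsetP => _ /imset2P[y b hy hb ->].
  rewrite mem_sneg inE in hy; rewrite mem_sneg inE; apply: contra hy => hyb.
  by rewrite -[(- y)%R](subrK b) -opprD mem_ssum.
have := subset_leq_card sub; rewrite card_sneg => hYB.
have cY : #|Y| + #|ssum X B| = #|G| by rewrite card_sneg addnC cardsC_G.
have cX := cardsC_G X.
have aY : admissible Y by rewrite admissibleE; apply/andP; split; lia.
have kY := kappa_min aY.
by apply/fragmentP; split => //; lia.
Qed.

Lemma atom_dual X : fragment X -> #|atom| + #|ssum X B| <= #|G|.
Proof.
move/fragment_dual/atom_spec.2; rewrite card_sneg.
by have := cardsC_G (ssum X B); lia.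
Qed.

(* Two smallest fragments with a common point coincide: by submodularity
   their union and intersection are admissible, and the intersection is a
   fragment, hence not smaller than an atom. *)
Lemma minimal_fragments_eq X Y z : fragment X -> fragment Y ->
  #|X| = #|atom| -> #|Y| = #|atom| -> z \in X -> z \in Y -> X = Y.
Proof.
move=> fX fY cX cY zX zY.
have zI : z \in X :&: Y by rewrite inE zX zY.
have dX := atom_dual fX.
have kB : #|[set z]| + kappa <= #|ssum [set z] B| by apply/kappa_min/admissible_set1.
rewrite cards1 ssum_set1l card_shift in kB.
have BI := card_ssum_r B zI.
have sub := card_ssumUI X Y B.
have UI := cardsUI X Y.
case/fragmentP: fX; rewrite admissibleE => /andP[_ XB] sX.
case/fragmentP: fY => _ sY.
have aU : admissible (X :|: Y).
  rewrite admissibleE; apply/andP; split; last by lia.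
  by apply/card_gt0P; exists z; rewrite inE zX.
have kU := kappa_min aU.
have aI : admissible (X :&: Y).
  rewrite admissibleE; apply/andP; split; first by apply/card_gt0P; exists z.
  exact: leq_ltn_trans (subset_leq_card (ssumSl B (subsetIl X Y))) XB.
have kI := kappa_min aI.
have fI : fragment (X :&: Y) by apply/fragmentP; split => //; lia.
have atomI := atom_spec.2 _ fI.
have eX : X :&: Y = X by apply/eqP; rewrite eqEcard subsetIl; lia.
have eY : X :&: Y = Y by apply/eqP; rewrite eqEcard subsetIr; lia.
by rewrite -eX eY.
Qed.

(* Hamidoune: the translate K of an atom through 0 is a subgroup, because
   K - v is an atom sharing the point 0 with K for every v in K. *)
Theorem fragment_subgroup : exists2 K : {set G}, GRing.zmod_closed K & fragment K.
Proof.
have [fA _] := atom_spec.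
have [x0 hx0] : exists x0, x0 \in atom.
  by case/fragmentP: fA; rewrite admissibleE => /andP[/card_gt0P].
pose K := shift atom (- x0)%R.
have K0 : 0%R \in K by rewrite mem_shift opprK add0r.
have fK : fragment K by apply: fragment_shift.
have cK : #|K| = #|atom| by rewrite card_shift.
exists K => //; split => // u v hu hv.
have eK : shift K (- v)%R = K.
  apply: (minimal_fragments_eq (fragment_shift _ fK) fK) K0 => //.
    by rewrite card_shift.
  by rewrite mem_shift opprK add0r.
by rewrite -eK mem_shift opprK subrK.
Qed.
End Connectivity.

Section Multiples.
Variables (G : finZmodType) (B : {set G}).

Definition nfold j : {set G} := iter j (fun X => ssum X B) [set 0%R].

Lemma nfoldS j : nfold j.+1 = ssum (nfold j) B.
Proof. by []. Qed.

Lemma nfold1 : nfold 1 = B.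
Proof. by rewrite nfoldS ssum_set1l shift0. Qed.

Lemma nfold_in_coset (K : {set G}) b0 j : GRing.zmod_closed K -> b0 \in B ->
  {in B &, forall x y, (x - y)%R \in K} -> nfold j \subset shift K (b0 *+ j)%R.
Proof.
move=> [K0 Ksub] hb0 BK.
have KD : {in K &, forall u v, (u + v)%R \in K}.
  move=> u v hu hv; rewrite -[v]opprK; apply: (Ksub) => //.
  by rewrite -sub0r; apply: Ksub.
elim: j => [|j IH]; first by apply/subsetP => z /set1P ->; rewrite mem_shift subrr.
apply/subsetP => z; rewrite nfoldS => /imset2P[y b hy hb ->]; rewrite mem_shift.
have -> : (y + b - b0 *+ j.+1 = (y - b0 *+ j) + (b - b0))%R.
  by rewrite mulrSr opprD addrACA.
apply: KD; last exact: BK.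
by rewrite -mem_shift; apply: (subsetP IH).
Qed.

Lemma two_cosets (K : {set G}) x y : GRing.zmod_closed K -> x \in B -> y \in B ->
  (x - y)%R \notin K -> #|K| + #|K| <= #|ssum K B|.
Proof.
move=> [_ Ksub] hx hy hxy.
have disj : shift K x :&: shift K y = set0.
  apply/setP => z; rewrite !inE !mem_shift; apply/negP => /andP[zx zy].
  by move: (Ksub _ _ zy zx); rewrite opprB addrC addrA subrK (negbTE hxy).
have := cardsUI (shift K x) (shift K y); rewrite disj cards0 addn0 !card_shift => <-.
by apply/subset_leq_card; rewrite subUset !shift_sub_ssum.
Qed.

Hypotheses (B0 : B != set0) (BT : B != setT).

Lemma nfold_neq0 j : nfold j != set0.
Proof.
case/set0Pn: B0 => b hb; elim: j => [|j /set0Pn[y hy]]; first by apply/set0Pn; exists 0%R; rewrite inE.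
by apply/set0Pn; exists (y + b)%R; rewrite nfoldS mem_ssum.
Qed.

Lemma nfold_growth j : nfold j.+1 != setT -> #|B| + j * kappa B <= #|nfold j.+1|.
Proof.
elim: j => [|j IH] NT; first by rewrite nfold1 mul0n addn0.
have NT' : nfold j.+1 != setT by apply: contra NT => /eqP e; rewrite nfoldS e ssumTl.
have := kappa_min B0 BT (X := nfold j.+1); rewrite /admissible nfold_neq0 -nfoldS NT.
by move=> /(_ isT); have := IH NT'; rewrite mulSn; lia.
Qed.

(* A set B with rB = G satisfies |B| <= 2 kappa(B): B cannot lie in one
   coset of the subgroup of fragment_subgroup, so that subgroup has at most
   kappa(B) elements. *)
Lemma card_le_twice_kappa r : nfold r = setT -> #|B| <= 2 * kappa B.
Proof.
move=> rT; have [K [K0 Ksub] fK] := fragment_subgroup B0 BT.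
case/(fragmentP B0): fK; rewrite admissibleE => /andP[_ KB] sK.
have BKB := card_ssum_r B K0.
case: (pickP (fun p : G * G => [&& p.1 \in B, p.2 \in B & (p.1 - p.2)%R \notin K])).
  by move=> [x y] /and3P[hx hy hxy]; move: (two_cosets (conj K0 Ksub) hx hy hxy); lia.
move=> inK; exfalso; case/set0Pn: B0 => b0 hb0.
have BK : {in B &, forall x y, (x - y)%R \in K}.
  by move=> x y hx hy; have := inK (x, y); rewrite /= hx hy => /negbFE.
have KT : shift K (b0 *+ r)%R = setT.
  by apply/eqP; rewrite eqEsubset subsetT -rT nfold_in_coset.
have := card_ltT (shift K (b0 *+ r)%R); rewrite card_shift KT eqxx ltnNge => /negbFE.
by have := card_ssum_l K hb0; lia.
Qed.
End Multiples.

Theorem basis_card_bound (G : finZmodType) (B : {set G}) r :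
  0 < r -> nfold B r = setT -> (forall j, 0 < j -> j < r -> nfold B j != setT) ->
  #|B| * r < 2 * #|G|.
Proof.
move=> r0 rT rmin.
have G0 : 0 < #|G| by apply/card_gt0P; exists 0%R.
case: r r0 rT rmin => [|[|r]] // _ rT rmin.
  by rewrite muln1; have := card_leT B; lia.
have BT : B != setT by rewrite -(nfold1 B) rmin.
have B0 : B != set0.
  apply/set0Pn; have : (0%R : G) \in nfold B r.+2 by rewrite rT inE.
  by rewrite nfoldS => /imset2P[_ b _ hb _]; exists b.
have grow := nfold_growth B0 BT (rmin r.+1 isT (ltnSn _)).
have small : #|nfold B r.+1| < #|G| by rewrite card_ltT rmin.
have twice := card_le_twice_kappa B0 BT rT.
have : #|B| * r <= 2 * kappa B * r by rewrite leq_mul2r twice orbT.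
by rewrite !mulnS; lia.
Qed.

Lemma sumset_nfold N h (A : {set 'I_N.+1}) : sumset h A = nfold A h.
Proof.
elim: h => [|h IH]; apply/setP => x; rewrite inE.
  apply/existsP/set1P => [[t]|->]; last by exists [tuple]; rewrite /= big_nil.
  by rewrite tuple0 /= big_nil mod0n => /eqP x0; apply: val_inj.
rewrite nfoldS -IH; apply/existsP/imset2P => [[t]|[y a]].
  case/tupleP: t => a t /=; rewrite big_cons => /andP[/andP[aA tA] /eqP e].
  exists (inZp (\sum_(b <- t) b)) a => //; last by apply: val_inj; rewrite /= modnDml addnC.
  by rewrite inE; apply/existsP; exists t; rewrite tA /=.
rewrite inE => /existsP[t /andP[tA /eqP e]] aA ->.
by exists [tuple of a :: t]; rewrite /= aA tA big_cons -e modnDml addnC eqxx.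
Qed.

Theorem mainTheorem5 (n : nat) (A : {set 'I_n}) (r : nat) :
  0 < n -> is_basis A -> is_rho A r -> #|A| * r < 2 * n.
Proof.
case: n A => [//|N] A _ _ [r0 rT rmin].
rewrite -[in 2 * _](card_ord N.+1); apply: basis_card_bound r0 _ _.
  by rewrite -sumset_nfold.
move=> j j0 jr; rewrite -sumset_nfold; apply: contraTneq jr => /(rmin j j0).
by rewrite leqNgt.
Qed.
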